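(* Let $q\in(0,1)$ and let $\mathbf X_1,\mathbf X_2,\dots$ be i.i.d. random vectors in $\mathbb R^n$ with nonnegative components, distributed as $\mathbf X$, whose log moment generating function $\Lambda(\boldsymbol\lambda)=\log\mathbb E[e^{\langle\boldsymbol\lambda,\mathbf X\rangle}]$ is finite for all $\boldsymbol\lambda\in\mathbb R^n$. Then for every $\delta>0$, $$\lim_{t\to\infty}\frac1t\log\mathsf P\Big(\frac1t\sum_{i=1}^t q^i\mathbf X_i\ge\delta\mathbf 1\Big)=-\infty,$$ where $\mathbf 1$ is the all-ones vector and $\mathbf x\ge\mathbf y$ means $x_j\ge y_j$ for every component $j$. *)

From HB Require Import structures.
From mathcomp Require Import all_boot all_order all_algebra.
From mathcomp Require Import all_classical all_reals all_analysis.
Set Implicit Arguments. Unset Strict Implicit. Unset Printing Implicit Defensive.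
Import Order.TTheory GRing.Theory Num.Theory.
Local Open Scope classical_set_scope.
Local Open Scope ring_scope.

Section Defs.
Context {d : measure_display} {T : measurableType d} {R : realType} {n : nat}.

Definition rvec_measurable (X : T -> 'I_n -> R) : Prop :=
  forall j : 'I_n, measurable_fun setT (fun x => X x j).

Definition vec_event (X : T -> 'I_n -> R) (B : 'I_n -> set R) : set T :=
  [set x | forall j : 'I_n, B j (X x j)].

(* Mutual independence of the random vectors (X i)_{i : nat}: product rule over
   every finite family of indices, for all Borel boxes (a pi-system generating
   the Borel sigma-algebra of R^n). *)
Definition rvec_indep (P : probability T R) (X : nat -> T -> 'I_n -> R) : Prop :=
  forall (s : seq nat) (B : nat -> 'I_n -> set R),
    uniq s -> (forall i j, measurable (B i j)) ->
    P (\bigcap_(i in [set i | i \in s]) vec_event (X i) (B i)) =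
    (\prod_(i <- s) P (vec_event (X i) (B i)))%E.

Definition rvec_same_law (P : probability T R) (Y X : T -> 'I_n -> R) : Prop :=
  forall B : 'I_n -> set R, (forall j, measurable (B j)) ->
    P (vec_event Y B) = P (vec_event X B).

Definition mgf_finite (P : probability T R) (X : T -> 'I_n -> R) : Prop :=
  forall lam : 'I_n -> R,
    (\int[P]_x (expR (\sum_(j < n) lam j * X x j))%:E < +oo)%E.

End Defs.

From HB Require Import structures.
From mathcomp Require Import all_boot all_order all_algebra.
From mathcomp Require Import all_classical all_reals all_analysis.
From mathcomp Require Import ring lra measurable_realfun.
Import Order.TTheory GRing.Theory Num.Theory.
Local Open Scope classical_set_scope.
Local Open Scope ring_scope.

(* Only one coordinate j and a union bound are needed.  If X_k j lies below
   a := t delta (1 - q) / q for every k < t, the geometric weights give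
   t^-1 * \sum_(k < t) q^(k+1) X_k j < delta, so the event lies in the union
   of the t events {a <= X_k j}.  By Chernoff's bound with parameter th, each
   has probability at most M(th) exp(-th a), with M the (finite) moment
   generating function of X0 j.  Hence
   t^-1 log P <= t^-1 (log t + log M(th)) - th delta (1 - q) / q,
   and th is arbitrary. *)

Lemma discounted_sum_lt {R : realFieldType} {q a : R} {x : nat -> R} {t : nat} :
  0 < q -> q < 1 -> 0 < a -> (forall i, (i < t)%N -> x i <= a) ->
  \sum_(i < t) q ^+ i.+1 * x i < a * q / (1 - q).
Proof.
move=> q0 q1 a0 xa.
have q1' : 1 - q != 0 by rewrite subr_eq0 gt_eqF.
have geom : \sum_(i < t) q ^+ i = (1 - q ^+ t) / (1 - q).
  apply: (canRL (mulfK q1')); rewrite mulrC.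
  by rewrite -opprB mulNr -subrX1 opprB.
have qt : 0 < q ^+ t by exact: exprn_gt0.
apply: (@le_lt_trans _ _ (\sum_(i < t) q ^+ i.+1 * a)).
  apply: ler_sum => i _; apply: ler_wpM2l; last exact: xa.
  exact: exprn_ge0 (ltW q0).
rewrite -mulr_suml.
under eq_bigr do rewrite exprS.
have c0 : 0 < a * q / (1 - q) by rewrite divr_gt0 ?mulr_gt0 ?subr_gt0.
rewrite -mulr_sumr geom.
rewrite [ltLHS](_ : _ = a * q / (1 - q) * (1 - q ^+ t)); last by field.
by rewrite -[ltRHS]mulr1 ltr_pM2l // ltrBlDr ltrDl.
Qed.

Lemma discounted_mean_ge_sub {R : realFieldType} {T : Type}
    (Y : nat -> T -> R) {q delta : R} {t : nat} :
  0 < q -> q < 1 -> 0 < delta -> (0 < t)%N ->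
  [set x | delta <= t%:R^-1 * \sum_(i < t) q ^+ i.+1 * Y i x] `<=`
  \big[setU/set0]_(k < t) [set x | t%:R * delta * (1 - q) / q <= Y k x].
Proof.
move=> q0 q1 delta0 t0.
rewrite -(bigcup_mkord t (fun k => [set x | _ <= Y k x])) => x mean_ge.
apply: contrapT => no_large.
have small k : (k < t)%N -> Y k x <= t%:R * delta * (1 - q) / q.
  move=> kt; apply/ltW; rewrite ltNge; apply/negP => large.
  by apply: no_large; exists k.
have tpos : 0 < t%:R :> R by rewrite ltr0n.
have a0 : 0 < t%:R * delta * (1 - q) / q.
  by rewrite divr_gt0 ?mulr_gt0 ?subr_gt0.
have := discounted_sum_lt q0 q1 a0 small.
rewrite [ltRHS](_ : _ = t%:R * delta); last by field; rewrite ?gt_eqF ?subr_gt0.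
move: mean_ge => /=; rewrite ler_pdivlMl //; lra.
Qed.

Lemma measurable_ge_set {d : measure_display} {T : measurableType d}
    {R : realType} (f : T -> R) (a : R) :
  measurable_fun setT f -> measurable [set x | a <= f x].
Proof.
move=> mf; rewrite -[X in measurable X]setTI.
by apply: measurable_fun_le => //; exact: measurable_cst.
Qed.

Lemma chernoff_measurable {d : measure_display} {T : measurableType d}
    {R : realType} (P : probability T R) (Y : T -> R) (th a : R) :
  measurable_fun setT Y -> 0 < th ->
  (P [set x | (a <= Y x)%R] <=
    (\int[P]_x (expR (th * Y x))%:E) * (expR (- (th * a)))%:E)%E.
Proof.
move=> mY th0; have := chernoff (mfun_Sub (mem_set mY : Y \in mfun)) a th0.
rewrite /mmt_gen_fun unlock /=; under eq_integral do rewrite mulrC.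
exact.
Qed.

Lemma vec_event_component {d : measure_display} {T : measurableType d}
    {R : realType} {n : nat} (Y : T -> 'I_n -> R) (j : 'I_n) (a : R) :
  vec_event Y (fun i => if i == j then `[a, +oo[%classic else setT) =
  [set x | (a <= Y x j)%R].
Proof.
apply/seteqP; split => x /=.
  by move=> /(_ j); rewrite eqxx /= in_itv /= andbT.
by move=> aY i; case: eqP => [->|_] //=; rewrite in_itv /= andbT.
Qed.

Lemma same_law_component_ge {d : measure_display} {T : measurableType d}
    {R : realType} {n : nat} {P : probability T R} {Y X : T -> 'I_n -> R}
    (j : 'I_n) (a : R) :
  rvec_same_law P Y X ->
  P [set x | (a <= Y x j)%R] = P [set x | (a <= X x j)%R].
Proof.
move=> YX; rewrite -!vec_event_component; apply: YX => i.
by case: (i == j).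
Qed.

Lemma mgf_finite_component {d : measure_display} {T : measurableType d}
    {R : realType} {n : nat} (P : probability T R) (X : T -> 'I_n -> R)
    (j : 'I_n) (th : R) :
  mgf_finite P X -> (\int[P]_x (expR (th * X x j))%:E)%E \is a fin_num.
Proof.
move=> /(_ (fun i => if i == j then th else 0)) mgf_lt.
rewrite ge0_fin_numE; last first.
  by apply: integral_ge0 => x _; rewrite lee_fin expR_ge0.
move: mgf_lt; congr (_ < _)%E; apply: eq_integral => x _.
rewrite (bigD1 j) //= eqxx big1 ?addr0 // => i /negPf ->.
by rewrite mul0r.
Qed.

Section discounted_mean_tail.
Context {d : measure_display} {T : measurableType d} {R : realType}
  (P : probability T R) {n : nat} (X : nat -> T -> 'I_n -> R)
  (X0 : T -> 'I_n -> R).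
Hypotheses (hXm : forall i, rvec_measurable (X i)) (hX0m : rvec_measurable X0)
  (hlaw : forall i, rvec_same_law P (X i) X0) (hmgf : mgf_finite P X0).
Variables (j : 'I_n) (th : R).
Hypothesis th0 : 0 < th.

Let C := fine (\int[P]_x (expR (th * X0 x j))%:E)%E.

Lemma component_tail_le k a :
  (P [set x | (a <= X k x j)%R] <= (C * expR (- (th * a)))%:E)%E.
Proof.
rewrite (same_law_component_ge j a (hlaw k)) EFinM /C fineK.
  exact: chernoff_measurable.
exact: mgf_finite_component.
Qed.

Lemma discounted_mean_tail_le {q delta : R} {t : nat} :
  0 < q -> q < 1 -> 0 < delta -> (0 < t)%N ->
  (P [set x | forall i : 'I_n,
        (delta <= t%:R^-1 * \sum_(k < t) q ^+ k.+1 * X k x i)%R] <=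
   (t%:R * C * expR (- (th * (t%:R * delta * (1 - q) / q))))%:E)%E.
Proof.
move=> q0 q1 delta0 t0.
set a := _ * _ / q; set E := [set x | _].
have mE : measurable E.
  rewrite [E](_ : _ = \bigcap_(i in [set: 'I_n])
      [set x | delta <= t%:R^-1 * \sum_(k < t) q ^+ k.+1 * X k x i]).
    apply: fin_bigcap_measurable; first exact: finite_finset.
    move=> i _; apply: measurable_ge_set; apply: measurable_funM.
      exact: measurable_cst.
    apply: measurable_sum => k.
    by apply: measurable_funM; [exact: measurable_cst | exact: hXm].
  by rewrite /E; apply/seteqP; split => x /= Ex i; [move=> _ |]; apply: Ex.
have sub : E `<=` \big[setU/set0]_(k < t) [set x | a <= X k x j].
  move=> x /(_ j) Ex.
  exact: (discounted_mean_ge_sub (fun k x => X k x j) q0 q1 delta0 t0 x Ex).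
have mF k : measurable [set x | a <= X k x j].
  by apply: measurable_ge_set; exact: hXm.
apply: (le_trans (content_subadditive P (fun k _ => mF k) mE sub)).
apply: (@le_trans _ _ (\sum_(k < t) (C * expR (- (th * a)))%:E)%E).
  by apply: lee_sum => k _; apply: component_tail_le.
by rewrite sumEFin sumr_const card_ord lee_fin mulr_natl mulrnAl.
Qed.

End discounted_mean_tail.

Lemma scaled_lne_le {R : realType} {p : \bar R} {t C L : R} :
  0 < t -> 0 <= C <= t -> (0 <= p)%E ->
  (p <= (t * C * expR (- (L * t)))%:E)%E ->
  ((t^-1)%:E * lne p <= (2 - L)%:E)%E.
Proof.
move=> t0 /andP[C0 Ct] p0 p_le.
have t_le_exp : t <= expR t by have := expR_ge1Dx t; lra.
have bound : t * C * expR (- (L * t)) <= expR (t * (2 - L)).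
  rewrite (_ : t * (2 - L) = t + t + - (L * t)); last by ring.
  rewrite !expRD ler_wpM2r ?expR_ge0 // ler_pM ?(ltW t0) //.
  exact: le_trans Ct t_le_exp.
have lne_le : (lne p <= (t * (2 - L))%:E)%E.
  rewrite -[X in (_ <= X)%E]expeRK lee_lne //.
  - by apply: (le_trans p_le); rewrite /= lee_fin.
  - by rewrite in_itv /= p0 leey.
  - by rewrite in_itv /= lee_fin expR_ge0 leey.
apply: (le_trans (lee_wpmul2l _ lne_le)); first by rewrite lee_fin invr_ge0 ltW.
by rewrite -EFinM mulrA mulVf ?gt_eqF // mul1r.
Qed.

(* X i stands for the paper's X_{i+1}; X0 is the generic vector X. *)
Theorem lemma5 (d : measure_display) (T : measurableType d) (R : realType)
  (P : probability T R) (n : nat) (hn : (0 < n)%N)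
  (q : R) (hq0 : 0 < q) (hq1 : q < 1)
  (X : nat -> T -> 'I_n -> R) (X0 : T -> 'I_n -> R)
  (hXm : forall i, rvec_measurable (X i)) (hX0m : rvec_measurable X0)
  (hXnn : forall i x j, 0 <= X i x j)
  (hind : rvec_indep P X)
  (hlaw : forall i, rvec_same_law P (X i) X0)
  (hmgf : mgf_finite P X0)
  (delta : R) (hdelta : 0 < delta) :
  (fun t : nat =>
     ((t%:R)^-1)%:E *
     lne (P [set x | forall j : 'I_n,
             (delta <= (t%:R)^-1 * \sum_(i < t) q ^+ i.+1 * X i x j)%R]))%E
    @ \oo --> -oo%E.
Proof.
pose j0 : 'I_n := Ordinal hn.
pose s := delta * (1 - q) / q.
have s0 : 0 < s by rewrite divr_gt0 ?mulr_gt0 ?subr_gt0.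
apply/cvgeNyPle => A.
pose th := (`|A| + 2) / s.
have th0 : 0 < th by rewrite divr_gt0 // ltr_wpDl.
pose C := fine (\int[P]_x (expR (th * X0 x j0))%:E)%E.
have C0 : 0 <= C.
  by apply: fine_ge0; apply: integral_ge0 => x _; rewrite lee_fin expR_ge0.
have [N CN] : exists N : nat, C < N%:R.
  by exists (Num.Def.archi_bound C); apply: archi_boundP.
exists (maxn 1 N) => // t /= Ht.
have t0 : (0 < t)%N by apply: leq_trans Ht; rewrite leq_maxl.
have Ct : C <= t%:R.
  by apply/ltW/(lt_le_trans CN); rewrite ler_nat (leq_trans _ Ht) ?leq_maxr.
have := discounted_mean_tail_le P X X0 hXm hX0m hlaw hmgf j0 _ th0
  hq0 hq1 hdelta t0.
rewrite (_ : t%:R * delta * (1 - q) / q = s * t%:R); last by rewrite /s; ring.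
rewrite mulrA /th divfK ?gt_eqF // => tail.
have tpos : 0 < t%:R :> R by rewrite ltr0n.
have C0t : 0 <= C <= t%:R by rewrite C0 Ct.
apply: (le_trans (scaled_lne_le tpos C0t (measure_ge0 _ _) tail)).
rewrite lee_fin; have := ler_norm (- A); rewrite normrN; lra.
Qed.
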